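(* Let $T$ be a tiling class (with finite local complexity) and $\mathcal N$ an approximating sub-almost-groupoid of $\mathcal M_{II}$. Then the topology of $\Omega_{\mathcal N}$ is generated by the sets $U_u$ with $u$ a unit of $\mathcal N$.
   Context: A $d$-dimensional tiling is a countable family of bounded closed subsets of $\mathbb R^d$ (tiles, closures of interiors, finitely many decorations) covering $\mathbb R^d$ and overlapping only at boundaries, up to translation; finite local complexity: finitely many classes of pairs of touching tiles. $\mathcal M_{II}$: doubly pointed pattern classes $M_{xy}$; $M_{x_1x_2}\preceq N_{y_1y_2}$ if $N$ contains a translate of $M$ with $x_i$ on $y_i$; $c\vdash c'$ if some $L_{z_1z_2}$ and tile $z$ of $L$ satisfy $c\preceq L_{z_1z}$, $c'\preceq L_{zz_2}$, $cc'$ being the minimal such; $(M_{xy})^{-1}=M_{yx}$; units $M_{xx}$; $L(c)=cc^{-1}$, $R(c)=c^{-1}c$; $\mathrm{rad}(u)$ the largest $r$ such that $u$ covers all $r$-balls centred in its pointed tile. A sub-almost-groupoid is a subset closed under inverses and products of composable elements. Hull $\Omega$: completion of the pointed tilings $T_x$ under $d(\omega,\omega')=e^{-\sup\{r:M_r(\omega)=M_r(\omega')\}}$; $u\preceq\omega$ if $u$ occurs at $\omega$'s pointed tile; $U_u=\{\omega:u\preceq\omega\}$. An approximating sequence is a sequence of units $u_\nu$ with $u_1\cdots u_k\vdash u_{k+1}$ for all $k$ and $\mathrm{rad}(u_\nu)\to\infty$; its limit is the pointed tiling containing all $u_\nu$ at its pointed tile. $\Omega_{\mathcal N}=\bigcup_{c\in\mathcal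 N}U_{R(c)}$ with relative topology; $\mathcal N$ is approximating if every $\omega\in\Omega_{\mathcal N}$ is the limit of an approximating sequence with elements in $\mathcal N$. *)

From HB Require Import structures.
From mathcomp Require Import all_boot all_order all_algebra.
From mathcomp Require Import all_classical all_reals all_analysis.
Set Implicit Arguments. Unset Strict Implicit. Unset Printing Implicit Defensive.
Import Order.TTheory GRing.Theory Num.Theory.
Import numFieldNormedType.Exports.
Local Open Scope classical_set_scope.
Local Open Scope ring_scope.

Section Tilings.
Variables (R : realType) (d : nat) (L : Type).

Definition point := 'rV[R]_d.

Definition edist (p q : point) : R := Num.sqrt (\sum_(i < d) (p 0 i - q 0 i) ^+ 2).
Definition eball (c : point) (r : R) : set point := [set p | edist p c < r].

(* a (decorated) tile: support in R^d together with its decoration *)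
Definition tile := (set point * L)%type.

Definition is_tile (t : tile) : Prop :=
  bounded_set t.1 /\ closed t.1 /\ closure (interior t.1) = t.1 /\ t.1 !=set0.

Definition tr (a : point) (t : tile) : tile := ([set p + a | p in t.1], t.2).
Definition shift_pat (a : point) (P : set tile) : set tile := [set tr a t | t in P].

Definition is_tiling (S : set tile) : Prop :=
  (forall t, S t -> is_tile t) /\ countable S /\
  (forall p : point, exists t, S t /\ t.1 p) /\
  (forall t t', S t -> S t' -> t <> t' -> interior t.1 `&` interior t'.1 = set0).

Definition FLC (S : set tile) : Prop :=
  exists F : set (tile * tile), finite_set F /\
    forall t t', S t -> S t' -> t <> t' -> t.1 `&` t'.1 !=set0 ->
      exists pr a, F pr /\ t = tr a pr.1 /\ t' = tr a pr.2.

(* (P, x, y) : the pattern P with the two distinguished tiles x and y *)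
Definition dpp := (set tile * tile * tile)%type.
Definition dpat (c : dpp) := c.1.1.
Definition dfst (c : dpp) := c.1.2.
Definition dsnd (c : dpp) := c.2.

Definition is_dpp (T : set tile) (c : dpp) : Prop :=
  finite_set (dpat c) /\ dpat c `<=` T /\ dpat c (dfst c) /\ dpat c (dsnd c).

Definition dpp_equiv (c c' : dpp) : Prop :=
  exists a, dpat c' = shift_pat a (dpat c) /\ dfst c' = tr a (dfst c) /\
            dsnd c' = tr a (dsnd c).

Definition dpp_le (c c' : dpp) : Prop :=
  exists a, shift_pat a (dpat c) `<=` dpat c' /\ tr a (dfst c) = dfst c' /\
            tr a (dsnd c) = dsnd c'.

Definition dinv (c : dpp) : dpp := (dpat c, dsnd c, dfst c).
Definition is_unit (c : dpp) : Prop := dfst c = dsnd c.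

Definition composable (T : set tile) (c c' : dpp) : Prop :=
  exists Lp z1 z2 z, is_dpp T (Lp, z1, z) /\ is_dpp T (Lp, z, z2) /\
    dpp_le c (Lp, z1, z) /\ dpp_le c' (Lp, z, z2).

Definition is_prod (T : set tile) (c c' p : dpp) : Prop :=
  is_dpp T p /\
  (exists z, dpat p z /\ dpp_le c (dpat p, dfst p, z) /\ dpp_le c' (dpat p, z, dsnd p)) /\
  (forall Lp z1 z2 z, is_dpp T (Lp, z1, z2) -> Lp z ->
     dpp_le c (Lp, z1, z) -> dpp_le c' (Lp, z, z2) -> dpp_le p (Lp, z1, z2)).

(* a subset of M_II, represented by a translation-saturated predicate on
   representatives, which is closed under inverses and composable products *)
Definition sub_almost_groupoid (T : set tile) (N : set dpp) : Prop :=
  (forall c, N c -> is_dpp T c) /\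
  (forall c c', is_dpp T c' -> dpp_equiv c c' -> N c -> N c') /\
  (forall c, N c -> N (dinv c)) /\
  (forall c c' p, N c -> N c' -> composable T c c' -> is_prod T c c' p -> N p).

Definition rad (u : dpp) : \bar R :=
  ereal_sup [set r%:E | r in [set r : R | forall c, (dfst u).1 c ->
               eball c r `<=` \bigcup_(t in dpat u) t.1]].

Definition ptiling := (set tile * tile)%type.

Definition Mr (w : ptiling) (r : R) : ptiling :=
  ([set t | w.1 t /\ exists c p, w.2.1 c /\ t.1 p /\ edist p c <= r], w.2).

Definition ppat_equiv (P P' : ptiling) : Prop :=
  exists a, P'.1 = shift_pat a P.1 /\ P'.2 = tr a P.2.

Definition hdist (w w' : ptiling) : \bar R :=
  expeR (- ereal_sup [set r%:E | r in [set r : R | (0 <= r)%R /\ ppat_equiv (Mr w r) (Mr w' r)]])%E.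

(* Omega: completion of {T_x}, realised as its closure among pointed tilings *)
Definition hull (T : set tile) : set ptiling :=
  [set w | is_tiling w.1 /\ w.1 w.2 /\
     forall e : R, 0 < e -> exists x, T x /\ (hdist w (T, x) < e%:E)%E].

Definition occurs (u : dpp) (w : ptiling) : Prop :=
  exists a, shift_pat a (dpat u) `<=` w.1 /\ tr a (dfst u) = w.2 /\ tr a (dsnd u) = w.2.

Definition U_set (T : set tile) (u : dpp) : set ptiling :=
  [set w | hull T w /\ occurs u w].

Definition OmegaN (T : set tile) (N : set dpp) : set ptiling :=
  [set w | exists c, N c /\ exists p, is_prod T (dinv c) c p /\ U_set T p w].

(* approximating sequences (indexed from 0) *)
Definition approx_seq (T : set tile) (u : nat -> dpp) : Prop :=
  (forall n, is_unit (u n)) /\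
  (exists P : nat -> dpp, P 0%N = u 0%N /\
     forall k, composable T (P k) (u k.+1) /\ is_prod T (P k) (u k.+1) (P k.+1)) /\
  (forall M : R, exists n0, forall n, (n0 <= n)%N -> (M%:E < rad (u n))%E).

Definition is_limit (u : nat -> dpp) (w : ptiling) : Prop := forall n, occurs (u n) w.

Definition approximating (T : set tile) (N : set dpp) : Prop :=
  forall w, OmegaN T N w -> exists u : nat -> dpp,
    (forall n, N (u n)) /\ approx_seq T u /\ is_limit u w.

Definition hull_open (T : set tile) (V : set ptiling) : Prop :=
  V `<=` hull T /\
  forall w, V w -> exists e : R, 0 < e /\
    forall w', hull T w' -> (hdist w w' < e%:E)%E -> V w'.

Definition relopen (T : set tile) (N : set dpp) (O : set ptiling) : Prop :=
  exists V, hull_open T V /\ O = V `&` OmegaN T N.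

(* open subsets of Omega_N in the topology generated by the U_u, u unit of N:
   every point has a neighbourhood which is a finite intersection of such U_u *)
Definition gen_open (T : set tile) (N : set dpp) (O : set ptiling) : Prop :=
  O `<=` OmegaN T N /\
  forall w, O w -> exists F : set dpp, finite_set F /\
    (forall u, F u -> N u /\ is_unit u) /\
    (forall u, F u -> U_set T u w) /\
    (forall w', OmegaN T N w' -> (forall u, F u -> U_set T u w') -> O w').

End Tilings.

From Pilot Require Import Defs.
From HB Require Import structures.
From mathcomp Require Import all_boot all_order all_algebra.
From mathcomp Require Import all_classical all_reals all_analysis.
From mathcomp Require Import lra.
Set Implicit Arguments. Unset Strict Implicit. Unset Printing Implicit Defensive.
Import Order.TTheory GRing.Theory Num.Theory.
Import numFieldNormedType.Exports.
Local Open Scope classical_set_scope.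
Local Open Scope ring_scope.

(* Two pointed tilings in which the same pattern u occurs at the pointed tile
   agree on the patch of radius r around it as soon as rad u > r: a tile
   meeting an r-ball centred in the pointed tile has an interior point in that
   ball, this point is covered by a tile of u, and distinct tiles have
   disjoint interiors.  An approximating sequence provides, at each point of
   Omega_N, units of N of arbitrarily large radius, so every relatively open
   set is a union of sets U_u.  Conversely, finitely many finite patterns
   occurring at w all lie in some patch of radius r around the pointed tile,
   hence occur at every w' with d(w, w') < e^-r; the sets where they occur
   are therefore open in the hull. *)

Lemma finite_set_uniform_bound (R : realType) (X : Type) (A : set X)
    (Q : X -> R -> Prop) :
  finite_set A -> (forall x, A x -> exists r, Q x r) ->
  (forall x r r', r <= r' -> Q x r -> Q x r') ->
  exists r, forall x, A x -> Q x r.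
Proof.
move=> finA exQ monoQ.
have /choice [f Qf] : forall x, exists r, A x -> Q x r.
  move=> x; have [/exQ [r Qr]|nAx] := pselect (A x); first by exists r.
  by exists 0.
have /finite_seqP [s fAs] : finite_set (f @` A) by exact: finite_image.
exists (\big[Num.max/0]_(y <- s) y) => x Ax; apply: monoQ (Qf x Ax).
have fx_s : [set` s] (f x) by rewrite -fAs; exists x.
exact: (le_bigmax_seq 0 (f x) xpredT id fx_s).
Qed.

Lemma exists_expR_lt (R : realType) (e : R) :
  0 < e -> exists r : R, 0 <= r /\ expR (- r) < e.
Proof.
move=> e_gt0; exists (Num.max 0 (- ln e) + 1).
have : - ln e <= Num.max 0 (- ln e) by rewrite le_max lexx orbT.
have : 0 <= Num.max 0 (- ln e) by rewrite le_max lexx.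
split; first lra.
by rewrite -[X in _ < X](@lnK _ e) ?posrE // ltr_expR; lra.
Qed.

Section Hull.
Variables (R : realType) (d : nat) (L : Type).
Local Notation point := (Defs.point R d).
Local Notation tile := (Defs.tile R d L).
Local Notation dpp := (Defs.dpp R d L).
Local Notation ptiling := (Defs.ptiling R d L).
Local Notation edist := (@Defs.edist R d).
Local Notation eball := (@Defs.eball R d).
Local Notation tr := (@Defs.tr R d L).
Local Notation Mr := (@Defs.Mr R d L).
Local Notation rad := (@Defs.rad R d L).
Implicit Types (t : tile) (u : dpp) (w : ptiling) (T : set tile) (N : set dpp).

Lemma edist_continuous (c : point) : continuous (edist^~ c).
Proof.
move=> p; apply: continuous_comp; last exact: sqrt_continuous.
move: p; apply: (@continuous_big R _ +%R 0 xpredT add_continuous) => i _ q.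
have coord_c : {for q, continuous (fun x : point => x 0 i - c 0 i)}.
  by apply: continuousB; [exact: coord_continuous | exact: cst_continuous].
exact: (continuousM coord_c coord_c).
Qed.

Lemma open_eball (c : point) r : open (eball c r).
Proof.
rewrite (_ : eball c r = edist^~ c @^-1` [set x | x < r]) //.
by apply: open_comp => [p _|]; [exact: edist_continuous | exact: open_lt].
Qed.

Lemma edistDr (p c a : point) : edist (p + a) (c + a) = edist p c.
Proof.
rewrite /edist; congr Num.sqrt; apply: eq_bigr => i _.
by rewrite !mxE opprD addrACA subrr addr0.
Qed.

Lemma trD (a b : point) t : tr b (tr a t) = tr (a + b) t.
Proof.
rewrite /tr /=; congr pair; rewrite image_comp; apply: eq_imagel => x _ /=.
by rewrite addrA.
Qed.

Lemma tr0 t : tr 0 t = t.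
Proof.
case: t => A l; rewrite /tr /=; congr pair.
by rewrite (eq_imagel (f' := id)) ?image_id // => x _; rewrite addr0.
Qed.

Lemma tile_interior_meets_open t (p : point) (U : set point) :
  is_tile t -> t.1 p -> open U -> U p -> interior t.1 `&` U !=set0.
Proof.
move=> [_ [_ [cl_int _]]] tp oU Up.
have : closure (interior t.1) p by rewrite cl_int.
by move=> /(_ U (open_nbhs_nbhs (conj oU Up))) [q [? ?]]; exists q.
Qed.

Lemma tiling_eq_of_interior (S : set tile) t t' (q : point) :
  is_tiling S -> S t -> S t' -> interior t.1 q -> t'.1 q -> t = t'.
Proof.
move=> [tiles [_ [_ disj]]] St St' tq t'q; apply: contrapT => neq.
have [y [t'y ty]] := tile_interior_meets_open (tiles _ St') t'q
  (@open_interior _ t.1) tq.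
have : (interior t.1 `&` interior t'.1) y by [].
by rewrite disj.
Qed.

Definition covers_balls u (r : R) :=
  forall c, (dfst u).1 c -> eball c r `<=` \bigcup_(s in dpat u) s.1.

Lemma covers_balls_of_rad_gt u (r : R) :
  (r%:E < rad u)%E -> exists2 r', r < r' & covers_balls u r'.
Proof. by move=> /ereal_sup_gt [_ [r' cov <-]]; rewrite lte_fin; exists r'. Qed.

Lemma tile_near_occurrence u w (a : point) (r : R) (c p : point) t :
  is_tiling w.1 -> shift_pat a (dpat u) `<=` w.1 -> tr a (dfst u) = w.2 ->
  covers_balls u r -> w.2.1 c -> w.1 t -> t.1 p -> edist p c < r ->
  exists2 s, dpat u s & t = tr a s.
Proof.
move=> tw sub_w first_w cov wc wt tp pc.
have [c0 uc0 def_c] : exists2 c0, (dfst u).1 c0 & c0 + a = c.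
  by move: wc; rewrite -first_w => -[c0 ? <-]; exists c0.
subst c.
have [q [tq qc]] := tile_interior_meets_open (tw.1 _ wt) tp
  (@open_eball (c0 + a) r) pc.
have : eball c0 r (q - a) by rewrite /eball /= -(edistDr _ _ a) subrK.
move=> /(cov c0 uc0) [s us sq]; exists s => //.
apply: (tiling_eq_of_interior tw wt _ tq); first by apply: sub_w; exists s.
by exists (q - a); rewrite ?subrK.
Qed.

Lemma Mr_le w (r1 r2 : R) : r1 <= r2 -> (Mr w r1).1 `<=` (Mr w r2).1.
Proof.
move=> r12 t [wt [c [p [wc [tp pc]]]]]; split => //.
by exists c, p; do 2!split => //; exact: le_trans r12.
Qed.

Lemma Mr_shift u w w' (a a' : point) (r r' : R) :
  is_tiling w.1 -> shift_pat a (dpat u) `<=` w.1 -> tr a (dfst u) = w.2 ->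
  shift_pat a' (dpat u) `<=` w'.1 -> tr a' (dfst u) = w'.2 ->
  covers_balls u r' -> r < r' ->
  forall t, (Mr w r).1 t -> (Mr w' r).1 (tr (a' - a) t).
Proof.
move=> tw sub_w first_w sub_w' first_w' cov rr' t [wt [c [p [wc [tp pc]]]]].
have [s us t_s] := tile_near_occurrence tw sub_w first_w cov wc wt tp
  (le_lt_trans pc rr').
have shift_t : tr (a' - a) t = tr a' s by rewrite t_s trD addrC subrK.
have shift_pointed : w'.2 = tr (a' - a) w.2.
  by rewrite -first_w -first_w' trD addrC subrK.
split; first by rewrite shift_t; apply: sub_w'; exists s.
exists (c + (a' - a)), (p + (a' - a)); split; [|split].
- by rewrite shift_pointed; exists c.
- by exists p.
- by rewrite edistDr.
Qed.

Lemma Mr_equiv_of_occurs u w w' (r r' : R) :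
  is_tiling w.1 -> is_tiling w'.1 -> occurs u w -> occurs u w' ->
  covers_balls u r' -> r < r' -> ppat_equiv (Mr w r) (Mr w' r).
Proof.
move=> tw tw' [a [sub_w [first_w _]]] [a' [sub_w' [first_w' _]]] cov rr'.
exists (a' - a); split; last by rewrite /= -first_w -first_w' trD addrC subrK.
apply/seteqP; split=> [t' Mt'|_ [t Mt <-]].
- exists (tr (a - a') t').
    exact: (Mr_shift tw' sub_w' first_w' sub_w first_w cov rr').
  by rewrite trD addrA subrK subrr tr0.
- exact: (Mr_shift tw sub_w first_w sub_w' first_w' cov rr').
Qed.

Lemma hdist_le_expR w w' (r : R) :
  0 <= r -> ppat_equiv (Mr w r) (Mr w' r) -> (hdist w w' <= (expR (- r))%:E)%E.
Proof.
move=> r_ge0 eq_r; rewrite /hdist (_ : (expR (- r))%:E = expeR (- r%:E)) //.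
by rewrite lee_expeR leeN2; apply: ereal_sup_ubound; exists r.
Qed.

Lemma hdist_lt_expR w w' (r : R) :
  (hdist w w' < (expR (- r))%:E)%E ->
  exists2 r', r < r' & ppat_equiv (Mr w r') (Mr w' r').
Proof.
rewrite /hdist (_ : (expR (- r))%:E = expeR (- r%:E)) // lte_expeR lteN2.
by move=> /ereal_sup_gt [_ [r' [_ eq_r'] <-]]; rewrite lte_fin; exists r'.
Qed.

Definition occurs_within u w (r : R) :=
  exists a, shift_pat a (dpat u) `<=` (Mr w r).1 /\
    tr a (dfst u) = w.2 /\ tr a (dsnd u) = w.2.

Lemma occurs_withinW u w (r1 r2 : R) :
  r1 <= r2 -> occurs_within u w r1 -> occurs_within u w r2.
Proof.
move=> r12 [a [sub_M ends]]; exists a; split => //.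
by move=> t /sub_M; exact: Mr_le.
Qed.

Lemma occurs_within_exists u w :
  is_tiling w.1 -> w.1 w.2 -> finite_set (dpat u) -> occurs u w ->
  exists r, occurs_within u w r.
Proof.
move=> tw w_pointed fin_u [a [sub_w ends]].
have [c wc] := (tw.1 _ w_pointed).2.2.2.
have near_w s : dpat u s -> exists r, (Mr w r).1 (tr a s).
  move=> us; have ws : w.1 (tr a s) by apply: sub_w; exists s.
  have [p sp] := (tw.1 _ ws).2.2.2.
  by exists (edist p c); split => //; exists c, p.
have [r Mr_u] := finite_set_uniform_bound fin_u near_w
  (fun s r1 r2 r12 => @Mr_le w r1 r2 r12 (tr a s)).
by exists r, a; split => // _ [s us <-]; exact: Mr_u.
Qed.

Lemma occurs_of_Mr_equiv u w w' (r : R) :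
  occurs_within u w r -> ppat_equiv (Mr w r) (Mr w' r) -> occurs u w'.
Proof.
move=> [a [sub_M [first_w last_w]]] [b [Mw' pointed_w']].
have {}pointed_w' : w'.2 = tr b w.2 := pointed_w'.
exists (a + b); rewrite -!trD first_w last_w pointed_w'; split => //.
move=> _ [s us <-]; rewrite -trD.
have : (Mr w' r).1 (tr b (tr a s)).
  by rewrite Mw'; exists (tr a s) => //; apply: sub_M; exists s.
by case.
Qed.

Definition occ_set T (F : set dpp) : set ptiling :=
  [set w | hull T w /\ forall u, F u -> occurs u w].

Lemma hull_open_occ_set T (F : set dpp) :
  finite_set F -> (forall u, F u -> finite_set (dpat u)) ->
  hull_open T (occ_set T F).
Proof.
move=> finF fin_pat; split=> [w []//|w [hull_w occ_w]].
have [r occ_r] : exists r, forall u, F u -> occurs_within u w r.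
  apply: finite_set_uniform_bound finF _ (@occurs_withinW^~ w) => u Fu.
  apply: occurs_within_exists; [exact: hull_w.1|exact: hull_w.2.1| |].
  - exact: fin_pat.
  - exact: occ_w.
exists (expR (- r)); split; first exact: expR_gt0.
move=> w' hull_w' /hdist_lt_expR [r' rr' eq_r']; split => // u Fu.
exact: occurs_of_Mr_equiv (occurs_withinW (ltW rr') (occ_r u Fu)) eq_r'.
Qed.

Lemma hull_open_bigcup T (I : Type) (P : set I) (V : I -> set ptiling) :
  (forall i, P i -> hull_open T (V i)) -> hull_open T (\bigcup_(i in P) V i).
Proof.
move=> oV; split=> [w [i Pi Vw]|w [i Pi Vw]]; first exact: (oV i Pi).1.
have [e [e_gt0 ball_V]] := (oV i Pi).2 w Vw.
by exists e; split => // w' hull_w' w'w; exists i => //; exact: ball_V.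
Qed.

Lemma hull_of_OmegaN T N w : OmegaN T N w -> hull T w.
Proof. by move=> [c [_ [p [_ []]]]]. Qed.

Lemma gen_open_of_relopen T N (O : set ptiling) :
  approximating T N -> relopen T N O -> gen_open T N O.
Proof.
move=> approxN [V [[V_hull V_open] ->]]; split=> [w []//|w [Vw OmNw]].
have [e [e_gt0 ball_V]] := V_open w Vw.
have [u [N_u [[unit_u [_ rad_u]] lim_u]]] := approxN w OmNw.
have [r [r_ge0 small_r]] := exists_expR_lt e_gt0.
have [n /(_ n (leqnn n)) /covers_balls_of_rad_gt [r' rr' cov]] := rad_u r.
exists [set u n]; split; first exact: finite_set1.
split; first by move=> _ ->; split; [exact: N_u|exact: unit_u].
split=> [_ ->|w' OmNw' Uw']; first by split; [exact: V_hull|exact: lim_u].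
have [hull_w' occ_w'] := Uw' (u n) erefl.
split => //; apply: ball_V => //; rewrite -lte_fin in small_r.
apply: le_lt_trans small_r; apply: hdist_le_expR => //.
exact: Mr_equiv_of_occurs (V_hull w Vw).1 hull_w'.1 (lim_u n) occ_w' cov rr'.
Qed.

Lemma relopen_of_gen_open T N (O : set ptiling) :
  sub_almost_groupoid T N -> gen_open T N O -> relopen T N O.
Proof.
move=> [N_dpp _] [sub_OmN gen_O].
pose admissible F := [/\ finite_set F, (forall u, F u -> finite_set (dpat u))
  & occ_set T F `&` OmegaN T N `<=` O].
exists (\bigcup_(F in admissible) occ_set T F); split.
  by apply: hull_open_bigcup => F [finF fin_pat _]; exact: hull_open_occ_set.
apply/seteqP; split=> [w Ow|w [[F [_ _ sub_O] occ_w] OmNw]]; last exact: sub_O.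
have [F [finF [NF [UF gen_F]]]] := gen_O w Ow.
have fin_pat u : F u -> finite_set (dpat u) by move=> /NF [/N_dpp []].
split; last exact: sub_OmN.
exists F.
  split=> // w' [[_ occ_w'] OmNw']; apply: gen_F => // u /occ_w' occ_u.
  by split; first exact: hull_of_OmegaN OmNw'.
by split; [exact: hull_of_OmegaN (sub_OmN w Ow)|move=> u /UF []].
Qed.

End Hull.

Theorem mainTheorem11 (R : realType) (d : nat) (L : Type)
  (T : set (tile R d L)) (N : set (dpp R d L)) :
  is_tiling T -> FLC T ->
  sub_almost_groupoid T N -> approximating T N ->
  forall O : set (ptiling R d L), O `<=` OmegaN T N ->
    (relopen T N O <-> gen_open T N O).
Proof.
move=> _ _ groupoidN approxN O _; split.
- exact: gen_open_of_relopen.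
- exact: relopen_of_gen_open.
Qed.
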